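(* Let $(X,d)$ be a complete doubling metric space, $G\ge0$, and let $\mathrm T=(\mathcal T,\{x_I\},\{r_I\})$ satisfy (T1), (T2), (T'3), (T4), (T5) and (M1)–(M7) with respect to $G$, with exponent $s$. Then $s$ is the unique zero of the pressure function $t\mapsto p(-tf)$, where $f(\omega)=\log(1/\rho_\omega)$ is the function from (M6).
   Context: Words: $A_N=\{0,\dots,N-1\}$ ($N\ge2$), $\Sigma_N=A_N^{\mathbb N}$, shift $\sigma(\omega_1\omega_2\dots)=\omega_2\omega_3\dots$; for a finite word $I$, $\sigma^n(I)=I_{n+1}\cdots I_{|I|}$. For $\mathcal T\subseteq\Sigma_N$, $\mathcal T^*$ is the set of finite prefixes $\omega|_k$ ($k\ge0$) of elements of $\mathcal T$, $\mathcal T_k$ those of length $k$, $[I]=\{\omega\in\mathcal T:I\prec\omega\}$; $\prec$ prefix relation; $IJ$ concatenation; incomparable words differ at some position $\le$ the shorter length. $\mathcal T\cup\mathcal T^*\subseteq\Sigma_{N+1}$ via $I\mapsto I\,N\,N\cdots$, metric $2^{-(\text{common prefix length})}$; $\operatorname{var}_ng=\sup\{|g(\omega)-g(\tau)|:\omega|_n=\tau|_n\}$; $g$ Hölder if $\sup_n\operatorname{var}_n(g)/a^n<\infty$ for some $a\in(0,1)$. $S_ng=\sum_{k<n}g\circ\sigma^k$. $f,g$ cohomologous if $f-g=h\circ\sigma-h$, $h$ continuous; $f$ lattice if cohomologous to a function valued in a proper closed subgroup of $\mathbb R$, non-lattice otherwise. Pressure of continuous $g:\mathcal T\to\mathbb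 R$: $p(g)=\lim_{n\to\infty}\frac1n\log\sum_{I\in\mathcal T_n}\exp\big(\sup_{\omega\in[I]}S_ng(\omega)\big)$. Tree conditions (constants $\rho,C,D,E>0$): (T1) $d(x_I,x_J)\ge C(r_I+r_J)$ for incomparable $I,J$; (T2) $\operatorname{diam}\{x_{IJ}:IJ\in\mathcal T^*\}\le Dr_I$; (T'3) for all $I$, $n\ge0$ and every $\mathcal I\subseteq\bigcup_{k\ge n}\mathcal T_k$ such that each $\omega\in\mathcal T$ has exactly one prefix in $\mathcal I$ and some element of $\mathcal I$ extends $I$: $\frac1Er_I^s\le\sum_{IJ\in\mathcal I}r_{IJ}^s\le Er_I^s$; (T4) $r_I\to0$ as $|I|\to\infty$; (T5) $r_{Ij}\ge\rho r_I$. Generated set $K=\{x_\omega\}$, $x_\omega=\lim_nx_{\omega|_n}$; $K_I=\{x_\omega\in K:I\prec\omega\}$; $A_r=\{x:\operatorname{dist}(x,A)\le r\}$. (M1)–(M7) w.r.t. $G\ge0$ (all words in $\mathcal T^*$): (M1) $\mathcal T=\{\omega:A_{\omega_n\omega_{n+1}}=1\ \forall n\}$, $A\in\{0,1\}^{N\times N}$ irreducible aperiodic. (M2) $\{x_I\}\subseteq K$. (M3) $r_{Ii}\le Rr_I$ for some $0<R<1$. (M4) bi-Lipschitz $\varphi_i:X\to X$ and $W,\delta_0>0$ with $\varphi_I=\varphi_{I_1}\circ\dots\circ\varphi_{I_{|I|}}$, $\varphi_\varnothing=\mathrm{id}$, $\varphi_I(K_J)=K_{IJ}$ and $(K_I)_{r_IWG\delta}\subseteq\varphi_I(K_{G\delta})$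 for $\delta\le\delta_0$. (M5) for fixed $\xi\in(0,\delta_0)$, $\kappa^\mp_{i,J}$ are the optimal constants with $\kappa^-_{i,J}\frac{r_{iJ}}{r_J}d(x,y)\le d(\varphi_ix,\varphi_iy)\le\kappa^+_{i,J}\frac{r_{iJ}}{r_J}d(x,y)$ on $\varphi_J(K_{G\xi})$, $\kappa^\pm_{I,J}=\prod_{n=1}^{|I|}\kappa^\pm_{I_n,\sigma^n(I)J}$, and $\kappa^\pm_{I,J}\to1$ as $|J|\to\infty$ uniformly in $I$. (M6) with $f_1(iJ)=\log\frac{r_J}{r_{iJ}\kappa^+_{i,J}}$, $f_2(iJ)=\log\frac{r_J}{r_{iJ}\kappa^-_{i,J}}$, $f_1(\varnothing)=f_2(\varnothing)=0$: $r_{i\omega|_n}/r_{\omega|_n}\to\rho_{i\omega}\in(0,1)$, $\omega\mapsto\rho_\omega$ continuous on $\mathcal T$, and Hölder extensions $\tilde f_1,\tilde f_2$ of $f_1,f_2$ to $\mathcal T\cup\mathcal T^*$ exist with $\tilde f_1=\tilde f_2=\log(1/\rho_\omega)=:f(\omega)$ on $\mathcal T$. (M7) $f$ is non-lattice. *)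

From Stdlib Require Import Reals Lra Lia Arith List Classical ClassicalEpsilon.
Import ListNotations.
Open Scope R_scope.

Definition is_metric {X : Type} (d : X -> X -> R) : Prop :=
  (forall x y, 0 <= d x y) /\
  (forall x y, d x y = 0 <-> x = y) /\
  (forall x y, d x y = d y x) /\
  (forall x y z, d x z <= d x y + d y z).

Definition Xconv {X : Type} (d : X -> X -> R) (u : nat -> X) (y : X) : Prop :=
  forall eps, 0 < eps -> exists n0, forall n, (n0 <= n)%nat -> d (u n) y < eps.

Definition Xcauchy {X : Type} (d : X -> X -> R) (u : nat -> X) : Prop :=
  forall eps, 0 < eps -> exists n0, forall n m, (n0 <= n)%nat -> (n0 <= m)%nat ->
    d (u n) (u m) < eps.

Definition complete_space {X : Type} (d : X -> X -> R) : Prop :=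
  forall u, Xcauchy d u -> exists y, Xconv d u y.

Definition doubling {X : Type} (d : X -> X -> R) : Prop :=
  exists M : nat, forall x0 rr, 0 < rr ->
    exists cs : list X, (length cs <= M)%nat /\
      forall y, d x0 y <= 2 * rr -> exists c, In c cs /\ d c y <= rr.

(* A_r = {y : dist(y, A) <= r}, with dist(y,A) = inf_{a in A} d(y,a) *)
Definition nbhd {X : Type} (d : X -> X -> R) (A : X -> Prop) (rr : R) (y : X) : Prop :=
  forall eps, 0 < eps -> exists a, A a /\ d y a < rr + eps.

Definition image {X : Type} (phi : X -> X) (S : X -> Prop) (y : X) : Prop :=
  exists x, S x /\ y = phi x.

Definition bi_lipschitz {X : Type} (d : X -> X -> R) (phi : X -> X) : Prop :=
  exists L, 0 < L /\ forall x y, d x y / L <= d (phi x) (phi y) <= L * d x y.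

Definition is_glb (S : R -> Prop) (m : R) : Prop :=
  (forall q, S q -> m <= q) /\ (forall b, (forall q, S q -> b <= q) -> b <= m).

(* finite words: list nat ; infinite words: nat -> nat (omega_1 = w 0) *)

Definition seqw := nat -> nat.

Definition pref (w : seqw) (n : nat) : list nat := map w (seq 0 n).

Definition shift (w : seqw) : seqw := fun n => w (S n).
Definition shiftk (k : nat) (w : seqw) : seqw := fun n => w (n + k)%nat.

Definition incomparable (I J : list nat) : Prop :=
  exists k, (k < length I)%nat /\ (k < length J)%nat /\ nth k I 0%nat <> nth k J 0%nat.

Definition Tstar (T : seqw -> Prop) (I : list nat) : Prop :=
  exists w, T w /\ pref w (length I) = I.

Definition cyl (T : seqw -> Prop) (I : list nat) (w : seqw) : Prop :=
  T w /\ pref w (length I) = I.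

Fixpoint words (N n : nat) : list (list nat) :=
  match n with
  | O => [ [] ]
  | S m => flat_map (fun i => map (cons i) (words N m)) (seq 0 N)
  end.

(* embedding T^* -> Sigma_{N+1}, I |-> I N N N ... *)
Definition emb (N : nat) (I : list nat) : seqw := fun n => nth n I N.

Definition agree (n : nat) (w t : seqw) : Prop := forall k, (k < n)%nat -> w k = t k.

(* continuity on U w.r.t. the metric 2^{-(common prefix length)} *)
Definition cont_on (U : seqw -> Prop) (g : seqw -> R) : Prop :=
  forall w, U w -> forall eps, 0 < eps -> exists m, forall t, U t -> agree m w t ->
    Rabs (g t - g w) < eps.

(* Hoelder on U: sup_n var_n(g)/a^n < oo for some a in (0,1), where
   var_n g = sup{|g w - g t| : w|n = t|n} (w, t in U) *)
Definition holder_on (U : seqw -> Prop) (g : seqw -> R) : Prop :=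
  exists a B, 0 < a < 1 /\ forall n w t, U w -> U t -> agree n w t ->
    Rabs (g w - g t) <= B * a ^ n.

Fixpoint Apow (A : nat -> nat -> nat) (N n i j : nat) : nat :=
  match n with
  | O => if Nat.eqb i j then 1%nat else 0%nat
  | S m => fold_right plus 0%nat (map (fun k => (A i k * Apow A N m k j)%nat) (seq 0 N))
  end.

Definition zero_one_matrix (A : nat -> nat -> nat) (N : nat) : Prop :=
  forall i j, (i < N)%nat -> (j < N)%nat -> A i j = 0%nat \/ A i j = 1%nat.

Definition irreducible (A : nat -> nat -> nat) (N : nat) : Prop :=
  forall i j, (i < N)%nat -> (j < N)%nat -> exists n, (0 < Apow A N n i j)%nat.

(* period of every state is 1: gcd{n : (A^n)_{ii} > 0} = 1 *)
Definition aperiodic (A : nat -> nat -> nat) (N : nat) : Prop :=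
  forall i, (i < N)%nat -> forall p, (1 < p)%nat ->
    exists n, (0 < Apow A N n i i)%nat /\ ~ Nat.divide p n.

(* K_I = {x_omega : omega in T, I prefix of omega}, x_omega = lim x_{omega|n} *)
Definition KI {X : Type} (d : X -> X -> R) (T : seqw -> Prop) (x : list nat -> X)
  (I : list nat) (y : X) : Prop :=
  exists w, T w /\ pref w (length I) = I /\ Xconv d (fun n => x (pref w n)) y.

Definition Kset {X : Type} d T x : X -> Prop := @KI X d T x [].

Fixpoint phiw {X : Type} (phi : nat -> X -> X) (I : list nat) : X -> X :=
  match I with
  | [] => fun y => y
  | i :: I' => fun y => phi i (phiw phi I' y)
  end.

Fixpoint kapw (kap : nat -> list nat -> R) (I J : list nat) : R :=
  match I with
  | [] => 1
  | i :: I' => kap i (I' ++ J) * kapw kap I' J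
  end.

(* f_1 / f_2 of (M6): f(iJ) = log (r_J / (r_{iJ} kappa_{i,J})), f(empty) = 0 *)
Definition fM6 (r : list nat -> R) (kap : nat -> list nat -> R) (I : list nat) : R :=
  match I with
  | [] => 0
  | i :: J => ln (r J / (r (i :: J) * kap i J))
  end.

(* unordered sums of nonnegative terms over a predicate P (= sup of finite sums) *)
Definition lsum (l : list R) : R := fold_right Rplus 0 l.

Definition usum_le (P : list nat -> Prop) (w : list nat -> R) (B : R) : Prop :=
  forall l, NoDup l -> (forall K, In K l -> P K) -> lsum (map w l) <= B.

Definition usum_ge (P : list nat -> Prop) (w : list nat -> R) (B : R) : Prop :=
  forall eps, 0 < eps -> exists l, NoDup l /\ (forall K, In K l -> P K) /\
    B - eps < lsum (map w l).

(* supremum of a set of reals (0 if it has no least upper bound) *)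
Definition Rsup (S : R -> Prop) : R :=
  match excluded_middle_informative (exists l, is_lub S l) with
  | left H => proj1_sig (constructive_indefinite_description _ H)
  | right _ => 0
  end.

Definition birkhoff (g : seqw -> R) (n : nat) (w : seqw) : R :=
  lsum (map (fun k => g (shiftk k w)) (seq 0 n)).

Definition pressure_seq (N : nat) (T : seqw -> Prop) (g : seqw -> R) (n : nat) : R :=
  / INR n * ln (lsum (map (fun I =>
      match excluded_middle_informative (Tstar T I) with
      | left _ => exp (Rsup (fun v => exists w, cyl T I w /\ v = birkhoff g n w))
      | right _ => 0
      end) (words N n))).

Definition is_pressure (N : nat) (T : seqw -> Prop) (g : seqw -> R) (P : R) : Prop :=
  Un_cv (pressure_seq N T g) P.

Definition proper_closed_subgroup (H : R -> Prop) : Prop :=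
  H 0 /\ (forall a b, H a -> H b -> H (a - b)) /\
  (forall y, (forall eps, 0 < eps -> exists z, H z /\ Rabs (y - z) < eps) -> H y) /\
  (exists y, ~ H y).

Definition cohomologous (T : seqw -> Prop) (f g : seqw -> R) : Prop :=
  exists h, cont_on T h /\ forall w, T w -> f w - g w = h (shift w) - h w.

Definition lattice (T : seqw -> Prop) (f : seqw -> R) : Prop :=
  exists g H, proper_closed_subgroup H /\ (forall w, T w -> H (g w)) /\ cohomologous T f g.

Definition non_lattice (T : seqw -> Prop) (f : seqw -> R) : Prop := ~ lattice T f.

Section Cond.
Context {X : Type} (d : X -> X -> R) (N : nat) (T : seqw -> Prop)
        (x : list nat -> X) (r : list nat -> R).

Definition T1 (C : R) : Prop :=
  forall I J, Tstar T I -> Tstar T J -> incomparable I J -> d (x I) (x J) >= C * (r I + r J).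

Definition T2 (D : R) : Prop :=
  forall I J J', Tstar T I -> Tstar T (I ++ J) -> Tstar T (I ++ J') ->
    d (x (I ++ J)) (x (I ++ J')) <= D * r I.

Definition T3' (s E : R) : Prop :=
  forall I, Tstar T I -> forall (n : nat) (Ic : list nat -> Prop),
    (forall J, Ic J -> Tstar T J /\ (n <= length J)%nat) ->
    (forall w, T w -> exists! k, Ic (pref w k)) ->
    (exists J, Ic (I ++ J)) ->
    usum_ge (fun K => exists J, K = I ++ J /\ Ic K) (fun K => Rpower (r K) s) (/ E * Rpower (r I) s) /\
    usum_le (fun K => exists J, K = I ++ J /\ Ic K) (fun K => Rpower (r K) s) (E * Rpower (r I) s).

Definition T4 : Prop :=
  forall eps, 0 < eps -> exists n0, forall I, Tstar T I -> (n0 <= length I)%nat -> Rabs (r I) < eps.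

Definition T5 (rho : R) : Prop :=
  forall I j, Tstar T (I ++ [j]) -> r (I ++ [j]) >= rho * r I.

Definition M1 (A : nat -> nat -> nat) : Prop :=
  zero_one_matrix A N /\ irreducible A N /\ aperiodic A N /\
  forall w, T w <-> ((forall n, (w n < N)%nat) /\ (forall n, A (w n) (w (S n)) = 1%nat)).

Definition M2 : Prop := forall I, Tstar T I -> Kset d T x (x I).

Definition M3 : Prop :=
  exists Rc, 0 < Rc < 1 /\ forall I i, Tstar T (I ++ [i]) -> r (I ++ [i]) <= Rc * r I.

Definition M4 (G : R) (phi : nat -> X -> X) (W delta0 : R) : Prop :=
  0 < W /\ 0 < delta0 /\
  (forall i, (i < N)%nat -> bi_lipschitz d (phi i)) /\
  (forall I J, Tstar T (I ++ J) ->
     forall y, image (phiw phi I) (KI d T x J) y <-> KI d T x (I ++ J) y) /\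
  (forall I, Tstar T I -> forall delta, 0 < delta <= delta0 ->
     forall y, nbhd d (KI d T x I) (r I * W * G * delta) y ->
       image (phiw phi I) (nbhd d (Kset d T x) (G * delta)) y).

Definition ratio_set (G : R) (phi : nat -> X -> X) (xi : R) (i : nat) (J : list nat) (q : R) : Prop :=
  exists y1 y2,
    image (phiw phi J) (nbhd d (Kset d T x) (G * xi)) y1 /\
    image (phiw phi J) (nbhd d (Kset d T x) (G * xi)) y2 /\ y1 <> y2 /\
    q = d (phi i y1) (phi i y2) / (r (i :: J) / r J * d y1 y2).

Definition M5 (G : R) (phi : nat -> X -> X) (delta0 xi : R)
  (kp km : nat -> list nat -> R) : Prop :=
  0 < xi < delta0 /\
  (forall i J, Tstar T (i :: J) ->
     is_lub (ratio_set G phi xi i J) (kp i J) /\ is_glb (ratio_set G phi xi i J) (km i J)) /\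
  (forall eps, 0 < eps -> exists m, forall I J, Tstar T (I ++ J) -> (m <= length J)%nat ->
     Rabs (kapw kp I J - 1) < eps /\ Rabs (kapw km I J - 1) < eps).

Definition TstarU (w : seqw) : Prop :=
  T w \/ exists I, Tstar T I /\ forall n, w n = emb N I n.

Definition M6 (kp km : nat -> list nat -> R) (rhow : seqw -> R) (f1t f2t : seqw -> R) : Prop :=
  (forall w, T w ->
     Un_cv (fun n => r (pref w (S n)) / r (pref (shift w) n)) (rhow w) /\ 0 < rhow w < 1) /\
  cont_on T rhow /\
  holder_on TstarU f1t /\ holder_on TstarU f2t /\
  (forall I, Tstar T I -> f1t (emb N I) = fM6 r kp I /\ f2t (emb N I) = fM6 r km I) /\
  (forall w, T w -> f1t w = ln (/ rhow w) /\ f2t w = ln (/ rhow w)).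

End Cond.

(* Write Z_n(t) = Σ_{I ∈ T_n} exp (sup_{[I]} S_n(-t f)) for the partition
   function whose exponential growth rate is p(-t f).
   1. Bounded distortion: the symbolic f(iJ) = log r_J - log r_{iJ} - log κ^+_{i,J} of (M6)
      telescopes along a word, and (M5), (M6) control the errors, so that
      log r_{ω|n} - log r_∅ = -S_n f(ω) + O(1) uniformly in n and ω.
   2. Hence Z_n(t) is comparable, up to factors exp(O(|t|)), both to r_∅^{-t} Σ_{I ∈ T_n} r_I^t
      and to Z_k(t) Z_{n-k}(t) from above; Fekete's lemma gives the limit p(-t f).
   3. (T'3) applied to the cut set T_n makes Σ_{I ∈ T_n} r_I^s bounded above and below,
      so p(-s f) = 0; and (M3), r_{Ii} <= R r_I, gives p(-t f) <= p(-u f) + (t - u) log R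
      for u <= t, so t |-> p(-t f) is strictly decreasing and s is its only zero.  Only the metric axioms, (T'3), (T5), (M1) and (M3)-(M6) enter the argument. *)

From Stdlib Require Import Reals List Lra Lia FunctionalExtensionality Classical ClassicalEpsilon.
Import ListNotations.
Open Scope R_scope.

Lemma pref_length w n : length (pref w n) = n.
Proof. unfold pref. rewrite length_map, length_seq. reflexivity. Qed.

Lemma pref_S w n : pref w (S n) = pref w n ++ [w n].
Proof. unfold pref. rewrite seq_S, map_app. reflexivity. Qed.

Lemma pref_cons w n : pref w (S n) = w 0%nat :: pref (shift w) n.
Proof. unfold pref, shift. simpl. f_equal. rewrite <- seq_shift, map_map. reflexivity. Qed.

Lemma shiftk_0 w : shiftk 0 w = w.
Proof. apply functional_extensionality. intro j. unfold shiftk. f_equal. lia. Qed.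

Lemma shiftk_S p w : shiftk (S p) w = shiftk p (shift w).
Proof. apply functional_extensionality. intro j. unfold shiftk, shift. f_equal. lia. Qed.

Lemma shiftk_add k n w : shiftk k (shiftk n w) = shiftk (k + n) w.
Proof. apply functional_extensionality. intro j. unfold shiftk. f_equal. lia. Qed.

Lemma pref_app w p m : pref w (p + m) = pref w p ++ pref (shiftk p w) m.
Proof.
  induction m as [|m IH].
  - rewrite Nat.add_0_r, app_nil_r. reflexivity.
  - rewrite Nat.add_succ_r, !pref_S, IH, <- app_assoc. unfold shiftk.
    do 4 f_equal. lia.
Qed.

Lemma nth_pref w n j dflt : (j < n)%nat -> nth j (pref w n) dflt = w j.
Proof.
  intro Hj. unfold pref.
  rewrite (nth_indep _ dflt (w 0%nat)) by (rewrite length_map, length_seq; lia).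
  rewrite map_nth, seq_nth by lia. reflexivity.
Qed.

Lemma app_inv_same_length {U} (l1 l2 m1 m2 : list U) :
  l1 ++ l2 = m1 ++ m2 -> length l1 = length m1 -> l1 = m1 /\ l2 = m2.
Proof.
  revert m1. induction l1 as [|a l1 IH]; intros [|b m1] Heq Hl; simpl in *;
    try discriminate; auto.
  injection Heq as -> Heq. destruct (IH m1 Heq ltac:(lia)) as [-> ->]. auto.
Qed.

Lemma Tstar_pref T w n : T w -> Tstar T (pref w n).
Proof. intro Hw. exists w. split; auto. rewrite pref_length. reflexivity. Qed.

Lemma lsum_app l1 l2 : lsum (l1 ++ l2) = lsum l1 + lsum l2.
Proof. induction l1 as [|a l1 IH]; simpl; [|rewrite IH]; lra. Qed.

Lemma lsum_scal_l {U} (g : U -> R) c l :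
  lsum (map (fun y => c * g y) l) = c * lsum (map g l).
Proof. induction l as [|a l IH]; simpl; [|rewrite IH]; lra. Qed.

Lemma lsum_scal_r {U} (g : U -> R) c l :
  lsum (map (fun y => g y * c) l) = lsum (map g l) * c.
Proof. induction l as [|a l IH]; simpl; [|rewrite IH]; lra. Qed.

Lemma lsum_le {U} (g h : U -> R) l :
  (forall y, In y l -> g y <= h y) -> lsum (map g l) <= lsum (map h l).
Proof.
  induction l as [|a l IH]; simpl; intro Hle; [lra|].
  assert (g a <= h a) by auto. assert (lsum (map g l) <= lsum (map h l)) by auto. lra.
Qed.

Lemma lsum_nonneg {U} (g : U -> R) l :
  (forall y, In y l -> 0 <= g y) -> 0 <= lsum (map g l).
Proof.
  induction l as [|a l IH]; simpl; intro Hg; [lra|].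
  assert (0 <= g a) by auto. assert (0 <= lsum (map g l)) by auto. lra.
Qed.

Notation remove_word := (remove (list_eq_dec Nat.eq_dec)).

Lemma lsum_remove_le (g : list nat -> R) l a :
  (forall y, In y l -> 0 <= g y) -> lsum (map g (remove_word a l)) <= lsum (map g l).
Proof.
  induction l as [|b l IH]; simpl; intros Hg; [lra|].
  assert (IH' : lsum (map g (remove_word a l)) <= lsum (map g l)) by auto.
  assert (0 <= g b) by auto.
  destruct (list_eq_dec Nat.eq_dec a b); simpl; lra.
Qed.

Lemma lsum_remove (g : list nat -> R) l a :
  (forall y, In y l -> 0 <= g y) -> In a l ->
  g a + lsum (map g (remove_word a l)) <= lsum (map g l).
Proof.
  induction l as [|b l IH]; simpl; intros Hg Ha; [contradiction|].
  destruct (list_eq_dec Nat.eq_dec a b) as [<-|Hne].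
  - pose proof (lsum_remove_le g l a ltac:(auto)). lra.
  - destruct Ha as [->|Ha]; [congruence|]. simpl.
    assert (g a + lsum (map g (remove_word a l)) <= lsum (map g l)) by auto. lra.
Qed.

Lemma lsum_incl (g : list nat -> R) l m :
  NoDup l -> incl l m -> (forall y, In y m -> 0 <= g y) ->
  lsum (map g l) <= lsum (map g m).
Proof.
  revert m. induction l as [|a l IH]; simpl; intros m Hnd Hinc Hg.
  - apply lsum_nonneg; auto.
  - inversion Hnd as [|? ? Hal Hnd']; subst.
    assert (Ha : In a m) by (apply Hinc; left; auto).
    assert (lsum (map g l) <= lsum (map g (remove_word a m))).
    { apply IH; auto.
      - intros y Hy. apply in_in_remove; [intros ->; contradiction|]. apply Hinc; right; auto.
      - intros y Hy. apply Hg. eapply in_remove; eauto. }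
    pose proof (lsum_remove g m a Hg Ha). lra.
Qed.

Lemma lsum_filter {U} (P : U -> Prop) (g : U -> R) l :
  lsum (map g (filter (fun y => if excluded_middle_informative (P y) then true else false) l)) =
  lsum (map (fun y => if excluded_middle_informative (P y) then g y else 0) l).
Proof.
  induction l as [|a l IH]; simpl; auto.
  destruct (excluded_middle_informative (P a)); simpl; rewrite IH; lra.
Qed.

Lemma lsum_flat_map (F : list nat -> R) L l :
  lsum (map F (flat_map (fun i => map (cons i) L) l)) =
  lsum (map (fun i => lsum (map (fun J => F (i :: J)) L)) l).
Proof.
  induction l as [|a l IH]; simpl; [reflexivity|].
  rewrite map_app, lsum_app, IH, map_map. reflexivity.
Qed.

Lemma words_split N (F : list nat -> R) n m :
  lsum (map F (words N (n + m))) =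
  lsum (map (fun I1 => lsum (map (fun I2 => F (I1 ++ I2)) (words N m))) (words N n)).
Proof.
  revert F. induction n as [|n IH]; intro F; simpl.
  - rewrite Rplus_0_r. reflexivity.
  - rewrite !lsum_flat_map. f_equal. apply map_ext. intro i.
    rewrite (IH (fun J => F (i :: J))). reflexivity.
Qed.

Lemma In_words_length N n I : In I (words N n) -> length I = n.
Proof.
  revert I. induction n as [|n IH]; simpl; intros I HI.
  - destruct HI as [<-|[]]; reflexivity.
  - apply in_flat_map in HI. destruct HI as (i & _ & HI).
    apply in_map_iff in HI. destruct HI as (J & <- & HJ). simpl. f_equal. auto.
Qed.

Lemma In_words N n I : length I = n -> (forall j, In j I -> (j < N)%nat) -> In I (words N n).
Proof.
  revert I. induction n as [|n IH]; simpl; intros I Hl Hb.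
  - destruct I; [left; auto|discriminate].
  - destruct I as [|i I]; [discriminate|]. apply in_flat_map. exists i. split.
    + apply in_seq. split; [lia|]. simpl. apply Hb. left; auto.
    + apply in_map, IH; [simpl in Hl; lia|]. intros; apply Hb; right; auto.
Qed.

Lemma NoDup_words N n : NoDup (words N n).
Proof.
  induction n as [|n IH]; simpl.
  - constructor; [intros []|constructor].
  - generalize (seq_NoDup N 0). induction (seq 0 N) as [|a l IHl]; simpl; intros Hl;
      [constructor|].
    inversion Hl as [|? ? Hal Hl']; subst. apply NoDup_app; auto.
    + apply NoDup_map_inv with (f := @tl nat). rewrite map_map. simpl. rewrite map_id. auto.
    + intros y Hy1 Hy2. apply in_map_iff in Hy1. destruct Hy1 as (J & <- & _).
      apply in_flat_map in Hy2. destruct Hy2 as (b & Hb & Hy). apply in_map_iff in Hy.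
      destruct Hy as (J' & Heq & _). injection Heq as -> _. contradiction.
Qed.

Section Subshift.
Context {N : nat} {T : seqw -> Prop} {A : nat -> nat -> nat}.
Hypothesis HM1 : M1 N T A.

Lemma T_letters w : T w -> forall k, (w k < N)%nat.
Proof. destruct HM1 as (_ & _ & _ & HT). intro Hw. apply HT in Hw. apply Hw. Qed.

Lemma T_shiftk n w : T w -> T (shiftk n w).
Proof.
  destruct HM1 as (_ & _ & _ & HT). intro Hw. apply HT in Hw. destruct Hw as [H1 H2].
  apply HT. unfold shiftk. split; intro j; [apply H1|].
  replace (S j + n)%nat with (S (j + n)) by lia. apply H2.
Qed.

Lemma T_shift w : T w -> T (shift w).
Proof.
  intro Hw. replace (shift w) with (shiftk 1 w) by (rewrite shiftk_S; apply shiftk_0).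
  apply T_shiftk; auto.
Qed.

Lemma Tstar_cons_inv i J : Tstar T (i :: J) -> (i < N)%nat /\ Tstar T J.
Proof.
  intros (w & Hw & Hp). simpl length in Hp. rewrite pref_cons in Hp.
  injection Hp as <- HJ. split; [apply T_letters; auto|].
  exists (shift w). split; auto. apply T_shift; auto.
Qed.

Lemma Tstar_app_inv I1 I2 : Tstar T (I1 ++ I2) -> Tstar T I1 /\ Tstar T I2.
Proof.
  intros (w & Hw & Hp). rewrite length_app, pref_app in Hp.
  apply app_inv_same_length in Hp; [|apply pref_length]. destruct Hp as [H1 H2]. split.
  - exists w; split; auto.
  - exists (shiftk (length I1) w); split; auto. apply T_shiftk; auto.
Qed.

Lemma Tstar_words I : Tstar T I -> In I (words N (length I)).
Proof.
  intros (w & Hw & Hp). apply In_words; auto. intros j Hj. rewrite <- Hp in Hj.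
  apply in_map_iff in Hj. destruct Hj as (k & <- & _). apply T_letters; auto.
Qed.

Lemma fold_plus_pos (g : nat -> nat) l :
  (0 < fold_right plus 0%nat (map g l))%nat -> exists k, In k l /\ (0 < g k)%nat.
Proof.
  induction l as [|a l IH]; simpl; intro H; [lia|].
  destruct (Nat.eq_dec (g a) 0) as [Ha|Ha].
  - destruct IH as (k & Hk & Hg); [lia|]. exists k; auto.
  - exists a; split; auto; lia.
Qed.

Lemma successor_exists : (2 <= N)%nat ->
  forall i, (i < N)%nat -> exists k, (k < N)%nat /\ A i k = 1%nat.
Proof.
  destruct HM1 as (H01 & Hirr & _). intros HN i Hi.
  set (j := if Nat.eqb i 0 then 1%nat else 0%nat).
  assert (Hj : (j < N)%nat /\ i <> j) by (unfold j; destruct (Nat.eqb_spec i 0); lia).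
  destruct (Hirr i j Hi (proj1 Hj)) as [[|n] Hn]; simpl in Hn.
  - destruct (Nat.eqb_spec i j); lia.
  - apply fold_plus_pos in Hn. destruct Hn as (k & Hk & Hg). apply in_seq in Hk.
    exists k. split; [lia|]. destruct (H01 i k Hi ltac:(lia)) as [H0|H1]; auto.
    rewrite H0 in Hg. simpl in Hg. lia.
Qed.

Lemma T_nonempty : (2 <= N)%nat -> exists w, T w.
Proof.
  intro HN. destruct HM1 as (_ & _ & _ & HT).
  assert (Hs : forall i, exists k, (i < N)%nat -> (k < N)%nat /\ A i k = 1%nat).
  { intro i. destruct (Nat.lt_ge_cases i N) as [Hi|Hi]; [|exists 0%nat; intro; lia].
    destruct (successor_exists HN i Hi) as (k & Hk). exists k; auto. }
  destruct (choice _ Hs) as [next Hnext].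
  assert (Hb : forall n, (Nat.iter n next 0%nat < N)%nat).
  { induction n; simpl; [lia|]. apply Hnext; auto. }
  exists (fun n => Nat.iter n next 0%nat). apply HT. split; auto.
  intro n. simpl. apply Hnext; auto.
Qed.

Lemma Tstar_nil : (2 <= N)%nat -> Tstar T [].
Proof. intro HN. destruct (T_nonempty HN) as [w Hw]. exists w. split; auto. Qed.

End Subshift.

Lemma exp_le x y : x <= y -> exp x <= exp y.
Proof. intros [H|H]; [left; apply exp_increasing; auto|subst; lra]. Qed.

Lemma ln_le x y : 0 < x -> x <= y -> ln x <= ln y.
Proof. intros Hx [H|H]; [left; apply ln_increasing; auto|subst; lra]. Qed.

Lemma ln_div x y : 0 < x -> 0 < y -> ln (x / y) = ln x - ln y.
Proof. intros Hx Hy. unfold Rdiv. rewrite ln_mult, ln_Rinv; auto with real. Qed.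

Lemma Rabs_le_inv x b : Rabs x <= b -> - b <= x <= b.
Proof. intro H. pose proof (Rle_abs x). pose proof (Rle_abs (- x)). rewrite Rabs_Ropp in *. lra. Qed.

Lemma ln_near_one x : Rabs (x - 1) < / 2 -> Rabs (ln x) <= ln 2.
Proof.
  intro Hx. apply Rabs_def2 in Hx. destruct Hx as [Hx1 Hx2].
  assert (ln x < ln 2) by (apply ln_increasing; lra).
  assert (ln (/ 2) < ln x) by (apply ln_increasing; lra).
  rewrite ln_Rinv in * by lra. apply Rabs_le. lra.
Qed.

Lemma birkhoff_S g p w : birkhoff g (S p) w = g w + birkhoff g p (shift w).
Proof.
  unfold birkhoff. simpl seq. simpl map. rewrite shiftk_0. simpl lsum. f_equal.
  rewrite <- seq_shift, map_map. f_equal. apply map_ext. intro k. rewrite shiftk_S. reflexivity.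
Qed.

Lemma birkhoff_add g n m w : birkhoff g (n + m) w = birkhoff g n w + birkhoff g m (shiftk n w).
Proof.
  induction m as [|m IH].
  - rewrite Nat.add_0_r. unfold birkhoff at 3. simpl. lra.
  - unfold birkhoff in *. rewrite Nat.add_succ_r, !seq_S, !map_app, !lsum_app, IH. simpl.
    rewrite shiftk_add, (Nat.add_comm m n). lra.
Qed.

Lemma birkhoff_scal (g : seqw -> R) c n w :
  birkhoff (fun v => c * g v) n w = c * birkhoff g n w.
Proof. unfold birkhoff. apply (lsum_scal_l (fun k => g (shiftk k w))). Qed.

Lemma birkhoff_abs_bound {N T A} (g : seqw -> R) c : M1 N T A ->
  (forall v, T v -> Rabs (g v) <= c) -> forall n w, T w -> Rabs (birkhoff g n w) <= INR n * c.
Proof.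
  intros HM1 Hg. induction n as [|n IH]; intros w Hw.
  - unfold birkhoff. simpl. rewrite Rabs_R0. lra.
  - rewrite birkhoff_S, S_INR. pose proof (IH (shift w) (T_shift HM1 w Hw)).
    pose proof (Hg w Hw). pose proof (Rabs_triang (g w) (birkhoff g n (shift w))). lra.
Qed.

Section Radii.
Context {T : seqw -> Prop} {r : list nat -> R} {rho Rc : R}.
Hypotheses (Hrpos : forall I, Tstar T I -> 0 < r I) (Hrho : 0 < rho) (HRc : 0 < Rc < 1)
  (HT5 : T5 T r rho) (HM3 : forall I i, Tstar T (I ++ [i]) -> r (I ++ [i]) <= Rc * r I).

(* iterating ρ r_I <= r_{Ij} <= R r_I along ω *)
Lemma ln_radius_bounds w n : T w ->
  INR n * ln rho <= ln (r (pref w n)) - ln (r []) <= INR n * ln Rc.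
Proof.
  intro Hw. induction n as [|n IH]; [change (pref w 0) with (@nil nat); simpl; lra|].
  rewrite pref_S. assert (Hs : Tstar T (pref w n ++ [w n])) by (rewrite <- pref_S; apply Tstar_pref; auto).
  assert (H0 : 0 < r (pref w n)) by (apply Hrpos, Tstar_pref; auto).
  pose proof (HT5 _ _ Hs). pose proof (HM3 _ _ Hs).
  assert (ln (rho * r (pref w n)) <= ln (r (pref w n ++ [w n]))) by (apply ln_le; [nra|lra]).
  assert (ln (r (pref w n ++ [w n])) <= ln (Rc * r (pref w n))) by (apply ln_le; [nra|lra]).
  rewrite ln_mult in * by lra. rewrite S_INR. lra.
Qed.

Lemma ln_radius_bounds_Tstar I : Tstar T I ->
  INR (length I) * ln rho <= ln (r I) - ln (r []) <= INR (length I) * ln Rc.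
Proof. intros (w & Hw & Hp). rewrite <- Hp. rewrite pref_length. apply ln_radius_bounds; auto. Qed.

Lemma ln_Rc_neg : ln Rc < 0.
Proof. rewrite <- ln_1. apply ln_increasing; lra. Qed.

(* since R < 1 the radii decrease, so |ln r_I - ln r_∅| <= -|I| ln ρ *)
Lemma ln_radius_abs I : Tstar T I -> Rabs (ln (r I) - ln (r [])) <= - INR (length I) * ln rho.
Proof.
  intro HI. pose proof (ln_radius_bounds_Tstar I HI). pose proof ln_Rc_neg.
  pose proof (pos_INR (length I)).
  assert (INR (length I) * ln Rc <= 0) by nra. apply Rabs_le. lra.
Qed.

End Radii.
(** Bounded distortion *)

(* (M4)-(M5): κ^+_{i,J} is the supremum of a nonempty set of positive ratios *)
Lemma kp_pos {X} {d : X -> X -> R} {N T x r G phi W delta0 xi kp km A} :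
  is_metric d -> (forall I, Tstar T I -> 0 < r I) -> M1 N T A ->
  M4 d N T x r G phi W delta0 -> M5 d T x r G phi delta0 xi kp km ->
  forall i J, Tstar T (i :: J) -> 0 < kp i J.
Proof.
  intros (Hd0 & Hdeq & _) Hrpos HM1 (_ & _ & Hbl & _) (_ & Hlub & _) i J HiJ.
  destruct (Tstar_cons_inv HM1 i J HiJ) as [HiN HJ].
  destruct (Hlub i J HiJ) as [[Hub Hleast] _].
  destruct (Hbl i HiN) as (L & HL & HLip).
  assert (Hne : exists q, ratio_set d T x r G phi xi i J q).
  { apply NNPP. intro Hn. assert (kp i J <= kp i J - 1); [|lra].
    apply Hleast. intros q Hq. exfalso. apply Hn. exists q; auto. }
  destruct Hne as (q & Hq). apply Rlt_le_trans with q; [|apply Hub; auto].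
  destruct Hq as (y1 & y2 & _ & _ & Hne & ->).
  assert (Hdy : 0 < d y1 y2).
  { destruct (Rle_lt_or_eq_dec 0 _ (Hd0 y1 y2)) as [h|h]; auto.
    symmetry in h. apply Hdeq in h. contradiction. }
  destruct (HLip y1 y2) as [Hl _].
  assert (0 < d y1 y2 / L) by (apply Rdiv_lt_0_compat; auto).
  assert (0 < r (i :: J) / r J) by (apply Rdiv_lt_0_compat; auto).
  apply Rdiv_lt_0_compat; [lra|]. apply Rmult_lt_0_compat; auto.
Qed.

Lemma f_symbolic_approx N T r kp km rhow f1t f2t : M6 N T r kp km rhow f1t f2t ->
  exists a B, 0 < a < 1 /\ 0 <= B /\ forall w k, T w ->
    Rabs (ln (/ rhow w) - fM6 r kp (pref w k)) <= B * a ^ k.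
Proof.
  intros (_ & _ & (a & B & Ha & Hh) & _ & Hemb & Hf).
  exists a, (Rabs B). split; auto. split; [apply Rabs_pos|]. intros w k Hw.
  assert (Hts := Tstar_pref T w k Hw).
  rewrite <- (proj1 (Hf w Hw)), <- (proj1 (Hemb _ Hts)).
  eapply Rle_trans; [apply (Hh k)|].
  - left; auto.
  - right. exists (pref w k). split; auto.
  - intros j Hj. unfold emb. rewrite nth_pref; auto.
  - apply Rmult_le_compat_r; [apply pow_le; lra|apply Rle_abs].
Qed.

Section Distortion.
Context {N : nat} {T : seqw -> Prop} {A : nat -> nat -> nat} {r : list nat -> R}
  {rho Rc : R} {kp : nat -> list nat -> R} {rhow : seqw -> R} {a B : R} {m : nat}.
Hypotheses (HM1 : M1 N T A) (Hrpos : forall I, Tstar T I -> 0 < r I)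
  (Hrho : 0 < rho) (HRc : 0 < Rc < 1) (HT5 : T5 T r rho)
  (HM3 : forall I i, Tstar T (I ++ [i]) -> r (I ++ [i]) <= Rc * r I)
  (Hkp : forall i J, Tstar T (i :: J) -> 0 < kp i J)
  (Ha : 0 < a < 1) (HB : 0 <= B)
  (Happrox : forall w k, T w -> Rabs (ln (/ rhow w) - fM6 r kp (pref w k)) <= B * a ^ k)
  (Hm : forall I J, Tstar T (I ++ J) -> (m <= length J)%nat -> Rabs (kapw kp I J - 1) < / 2).

Let f : seqw -> R := fun v => ln (/ rhow v).

Lemma fM6_cons i J : Tstar T (i :: J) ->
  fM6 r kp (i :: J) = ln (r J) - ln (r (i :: J)) - ln (kp i J).
Proof.
  intro HiJ. destruct (Tstar_cons_inv HM1 i J HiJ) as [_ HJ].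
  pose proof (Hrpos _ HiJ). pose proof (Hrpos _ HJ). pose proof (Hkp i J HiJ).
  simpl. rewrite ln_div, ln_mult; try lra. apply Rmult_lt_0_compat; auto.
Qed.

Lemma kapw_pos I J : Tstar T (I ++ J) -> 0 < kapw kp I J.
Proof.
  revert J. induction I as [|i I IH]; simpl; intros J H; [lra|].
  apply Rmult_lt_0_compat; auto. apply IH, (Tstar_cons_inv HM1 _ _ H).
Qed.

(* telescoping f(ω) ≈ f(iJ) = log r_J - log r_{iJ} - log κ_{i,J} along the first p letters *)
Lemma telescoped_distortion p w : T w ->
  Rabs (ln (r (pref w (p + m))) - ln (r (pref (shiftk p w) m)) + birkhoff f p w
        + ln (kapw kp (pref w p) (pref (shiftk p w) m))) <= B * (1 - a ^ p) / (1 - a).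
Proof.
  revert w. induction p as [|p IH]; intros w Hw.
  - change (pref w 0) with (@nil nat). rewrite shiftk_0. unfold birkhoff. simpl.
    rewrite ln_1. replace (B * (1 - 1) / (1 - a)) with 0 by (field; lra).
    replace (ln (r (pref w m)) - ln (r (pref w m)) + 0 + 0) with 0 by ring.
    rewrite Rabs_R0. lra.
  - specialize (IH (shift w) (T_shift HM1 w Hw)).
    rewrite shiftk_S. simpl (S p + m)%nat. rewrite pref_cons, birkhoff_S, (pref_cons w p).
    simpl kapw. rewrite <- pref_app.
    set (L := pref (shift w) (p + m)) in *. set (J := pref (shiftk p (shift w)) m) in *.
    assert (HL : Tstar T (w 0%nat :: L)) by (unfold L; rewrite <- pref_cons; apply Tstar_pref; auto).
    assert (Hkw : 0 < kapw kp (pref (shift w) p) J).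
    { apply kapw_pos. unfold J. rewrite <- pref_app. apply Tstar_pref, (T_shift HM1); auto. }
    rewrite ln_mult by auto.
    pose proof (Happrox w (S (p + m)) Hw) as Hh. rewrite pref_cons in Hh. fold L in Hh.
    change (ln (/ rhow w)) with (f w) in Hh.
    assert (Hap : a ^ S (p + m) <= a ^ p).
    { replace (S (p + m)) with (p + S m)%nat by lia. rewrite pow_add.
      pose proof (pow_lt_1_compat a (S m) ltac:(lra) ltac:(lia)). pose proof (pow_le a p ltac:(lra)). nra. }
    assert (Hsum : B * (1 - a ^ p) / (1 - a) + B * a ^ p = B * (1 - a ^ S p) / (1 - a))
      by (simpl; field; lra).
    assert (B * a ^ S (p + m) <= B * a ^ p) by (apply Rmult_le_compat_l; auto).
    rewrite (fM6_cons _ _ HL) in Hh.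
    (* the expression is the approximation error at ω plus the same expression for σ ω *)
    pose proof (Rabs_triang (f w - (ln (r L) - ln (r (w 0%nat :: L)) - ln (kp (w 0%nat) L)))
      (ln (r L) - ln (r J) + birkhoff f p (shift w) + ln (kapw kp (pref (shift w) p) J))).
    match goal with |- Rabs ?e <= _ => replace e with
      (f w - (ln (r L) - ln (r (w 0%nat :: L)) - ln (kp (w 0%nat) L)) +
       (ln (r L) - ln (r J) + birkhoff f p (shift w) + ln (kapw kp (pref (shift w) p) J)))
      by (unfold f; ring) end.
    lra.
Qed.

Lemma bounded_distortion_core : exists K, forall n w, T w ->
  Rabs (ln (r (pref w n)) - ln (r []) + birkhoff f n w) <= K.
Proof.
  assert (Hf : forall v, T v -> Rabs (f v) <= B).
  { intros v Hv. pose proof (Happrox v 0 Hv) as Hh. simpl in Hh. fold f in Hh.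
    rewrite Rminus_0_r, Rmult_1_r in Hh. exact Hh. }
  pose proof (birkhoff_abs_bound f B HM1 Hf) as Hbirk.
  assert (Hrad : forall n w, T w -> Rabs (ln (r (pref w n)) - ln (r [])) <= INR n * Rabs (ln rho)).
  { intros n w Hw.
    pose proof (ln_radius_abs Hrpos Hrho HRc HT5 HM3 _ (Tstar_pref T w n Hw)) as H.
    rewrite pref_length in H. pose proof (Rle_abs (- ln rho)). rewrite Rabs_Ropp in *.
    pose proof (pos_INR n). nra. }
  assert (Hkap : forall p w, T w -> Rabs (ln (kapw kp (pref w p) (pref (shiftk p w) m))) <= ln 2).
  { intros p w Hw. apply ln_near_one, Hm; [rewrite <- pref_app; apply Tstar_pref; auto|].
    rewrite pref_length. lia. }
  assert (Hgeom : forall p, B * (1 - a ^ p) / (1 - a) <= B / (1 - a)).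
  { intro p. unfold Rdiv. apply Rmult_le_compat_r; [left; apply Rinv_0_lt_compat; lra|].
    pose proof (pow_le a p ltac:(lra)). nra. }
  assert (Hln2 : 0 < ln 2) by (pose proof ln_lt_2; lra).
  assert (Hgeom0 : 0 <= B / (1 - a)).
  { unfold Rdiv. apply Rmult_le_pos; [lra|left; apply Rinv_0_lt_compat; lra]. }
  exists (B / (1 - a) + ln 2 + INR m * (B + Rabs (ln rho))).
  intros n w Hw. pose proof (pos_INR m). pose proof (Rabs_pos (ln rho)).
  destruct (Nat.le_gt_cases m n) as [Hmn|Hnm].
  - (* split ω|_n as ω|_p (σ^p ω)|_m and telescope over the first p letters *)
    replace n with ((n - m) + m)%nat by lia. set (p := (n - m)%nat). rewrite birkhoff_add.
    pose proof (T_shiftk HM1 p w Hw) as Hsw.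
    pose proof (Rabs_le_inv _ _ (telescoped_distortion p w Hw)) as H1.
    pose proof (Rabs_le_inv _ _ (Hkap p w Hw)) as H2.
    pose proof (Rabs_le_inv _ _ (Hrad m _ Hsw)) as H3.
    pose proof (Rabs_le_inv _ _ (Hbirk m _ Hsw)) as H4.
    pose proof (Hgeom p). apply Rabs_le. split; nra.
  - pose proof (Rabs_le_inv _ _ (Hrad n w Hw)) as H3.
    pose proof (Rabs_le_inv _ _ (Hbirk n w Hw)) as H4.
    assert (INR n * (B + Rabs (ln rho)) <= INR m * (B + Rabs (ln rho)))
      by (apply Rmult_le_compat_r; [lra|apply le_INR; lia]).
    apply Rabs_le. split; nra.
Qed.

End Distortion.

Lemma bounded_distortion {X} {d : X -> X -> R} {N T A x r G phi delta0 xi rho kp km rhow f1t f2t} :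
  M1 N T A -> (forall I, Tstar T I -> 0 < r I) -> 0 < rho -> T5 T r rho -> M3 T r ->
  (forall i J, Tstar T (i :: J) -> 0 < kp i J) ->
  M5 d T x r G phi delta0 xi kp km -> M6 N T r kp km rhow f1t f2t ->
  exists K, forall n w, T w ->
    Rabs (ln (r (pref w n)) - ln (r []) + birkhoff (fun v => ln (/ rhow v)) n w) <= K.
Proof.
  intros HM1 Hrpos Hrho HT5 (Rc & HRc & HM3) Hkp (_ & _ & Hkap) HM6.
  destruct (f_symbolic_approx _ _ _ _ _ _ _ _ HM6) as (a & B & Ha & HB & Happrox).
  destruct (Hkap (/ 2) ltac:(lra)) as [m Hm].
  exact (bounded_distortion_core HM1 Hrpos Hrho HRc HT5 HM3 Hkp Ha HB Happrox
           (fun I J h1 h2 => proj1 (Hm I J h1 h2))).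
Qed.
(** Partition functions *)

Definition cyl_weight (T : seqw -> Prop) (g : seqw -> R) (I : list nat) : R :=
  match excluded_middle_informative (Tstar T I) with
  | left _ => exp (Rsup (fun v => exists w, cyl T I w /\ v = birkhoff g (length I) w))
  | right _ => 0
  end.

Definition partition_fn (N : nat) (T : seqw -> Prop) (g : seqw -> R) (n : nat) : R :=
  lsum (map (cyl_weight T g) (words N n)).

Lemma pressure_seq_partition N T g n :
  pressure_seq N T g n = / INR n * ln (partition_fn N T g n).
Proof.
  unfold pressure_seq, partition_fn. do 3 f_equal. apply map_ext_in. intros I HI.
  apply In_words_length in HI. unfold cyl_weight. rewrite HI. reflexivity.
Qed.

Lemma is_pressure_partition N T g P :
  is_pressure N T g P <-> Un_cv (fun n => / INR n * ln (partition_fn N T g n)) P.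
Proof.
  unfold is_pressure.
  replace (pressure_seq N T g) with (fun n => / INR n * ln (partition_fn N T g n)); [tauto|].
  apply functional_extensionality. intro n. symmetry. apply pressure_seq_partition.
Qed.

Lemma Rsup_lub (S : R -> Prop) :
  (exists v, S v) -> (exists U, forall v, S v -> v <= U) -> is_lub S (Rsup S).
Proof.
  intros Hne Hb. unfold Rsup. destruct (excluded_middle_informative _) as [H|H].
  - destruct (constructive_indefinite_description _ H). simpl. auto.
  - exfalso. apply H. destruct (completeness S) as [l Hl]; eauto.
Qed.

Lemma Rsup_bounds (S : R -> Prop) lo hi :
  (exists v, S v) -> (forall v, S v -> lo <= v <= hi) -> lo <= Rsup S <= hi.
Proof.
  intros Hne Hb. assert (Hl : is_lub S (Rsup S)).
  { apply Rsup_lub; auto. exists hi. intros; apply Hb; auto. }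
  destruct Hl as [Hu Hle]. destruct Hne as [v Hv]. split.
  - specialize (Hu v Hv). specialize (Hb v Hv). lra.
  - apply Hle. intros y Hy. apply Hb; auto.
Qed.

Lemma cyl_weight_nonneg T g I : 0 <= cyl_weight T g I.
Proof. unfold cyl_weight. destruct (excluded_middle_informative _); [left; apply exp_pos|lra]. Qed.

Definition potential (rhow : seqw -> R) (t : R) : seqw -> R := fun w => - t * ln (/ rhow w).

Definition radius_weight (T : seqw -> Prop) (r : list nat -> R) (t : R) (I : list nat) : R :=
  if excluded_middle_informative (Tstar T I) then Rpower (r I) t else 0.

Definition radius_sum (N : nat) (T : seqw -> Prop) (r : list nat -> R) (t : R) (n : nat) : R :=
  lsum (map (radius_weight T r t) (words N n)).

Section Partition.
Context {N : nat} {T : seqw -> Prop} {A : nat -> nat -> nat} {r : list nat -> R}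
  {rhow : seqw -> R} {K : R}.
Hypotheses (HM1 : M1 N T A)
  (HK : forall n w, T w ->
     Rabs (ln (r (pref w n)) - ln (r []) + birkhoff (fun v => ln (/ rhow v)) n w) <= K).

(* by bounded distortion, S_{|I|}(-t f) = t (log r_I - log r_∅) ± |t| K on [I] *)
Lemma cyl_birkhoff_bounds t I : Tstar T I ->
  (exists v, exists w, cyl T I w /\ v = birkhoff (potential rhow t) (length I) w) /\
  (forall v, (exists w, cyl T I w /\ v = birkhoff (potential rhow t) (length I) w) ->
     t * (ln (r I) - ln (r [])) - Rabs t * K <= v <= t * (ln (r I) - ln (r [])) + Rabs t * K).
Proof.
  intro HI. split.
  - destruct HI as (w & Hw & Hp). eexists. exists w. split; [split|]; eauto.
  - intros v (w & [Hw Hp] & ->). unfold potential. rewrite birkhoff_scal.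
    specialize (HK (length I) w Hw). rewrite Hp in HK.
    assert (Rabs t * Rabs (ln (r I) - ln (r []) + birkhoff (fun v => ln (/ rhow v)) (length I) w)
            <= Rabs t * K) by (apply Rmult_le_compat_l; auto; apply Rabs_pos).
    rewrite <- Rabs_mult in H. apply Rabs_le_inv in H. lra.
Qed.

Lemma cyl_weight_bounds t I : Tstar T I ->
  exp (t * (ln (r I) - ln (r [])) - Rabs t * K) <= cyl_weight T (potential rhow t) I <=
  exp (t * (ln (r I) - ln (r [])) + Rabs t * K).
Proof.
  intro HI. unfold cyl_weight. destruct (excluded_middle_informative _) as [_|]; [|contradiction].
  destruct (cyl_birkhoff_bounds t I HI) as [Hne Hb].
  pose proof (Rsup_bounds _ _ _ Hne Hb). split; apply exp_le; lra.
Qed.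

Lemma cyl_weight_submult t I1 I2 :
  cyl_weight T (potential rhow t) (I1 ++ I2) <=
  cyl_weight T (potential rhow t) I1 * cyl_weight T (potential rhow t) I2.
Proof.
  unfold cyl_weight at 1. destruct (excluded_middle_informative _) as [H12|];
    [|apply Rmult_le_pos; apply cyl_weight_nonneg].
  destruct (Tstar_app_inv HM1 _ _ H12) as [H1 H2].
  unfold cyl_weight. do 2 (destruct (excluded_middle_informative _); [|contradiction]).
  rewrite <- exp_plus. apply exp_le.
  destruct (cyl_birkhoff_bounds t _ H12) as [Hne12 Hb12].
  destruct (cyl_birkhoff_bounds t _ H1) as [Hne1 Hb1].
  destruct (cyl_birkhoff_bounds t _ H2) as [Hne2 Hb2].
  destruct (Rsup_lub _ Hne1 ltac:(eexists; intros v h; apply (Hb1 v h))) as [Hub1 _].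
  destruct (Rsup_lub _ Hne2 ltac:(eexists; intros v h; apply (Hb2 v h))) as [Hub2 _].
  destruct (Rsup_lub _ Hne12 ltac:(eexists; intros v h; apply (Hb12 v h))) as [_ Hle].
  apply Hle. intros v (w & [Hw Hp] & ->). rewrite length_app, birkhoff_add.
  rewrite length_app, pref_app in Hp.
  apply app_inv_same_length in Hp; [|apply pref_length]. destruct Hp as [Hp1 Hp2].
  apply Rplus_le_compat; [apply Hub1; exists w|apply Hub2; exists (shiftk (length I1) w)];
    repeat split; auto. apply (T_shiftk HM1); auto.
Qed.

Lemma partition_submult t n m :
  partition_fn N T (potential rhow t) (n + m) <=
  partition_fn N T (potential rhow t) n * partition_fn N T (potential rhow t) m.
Proof.
  unfold partition_fn. rewrite words_split, <- lsum_scal_r. apply lsum_le. intros I1 _.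
  rewrite <- lsum_scal_l. apply lsum_le. intros I2 _. apply cyl_weight_submult.
Qed.

Lemma partition_vs_radius_sum t n :
  exp (- Rabs t * K - t * ln (r [])) * radius_sum N T r t n <= partition_fn N T (potential rhow t) n <=
  exp (Rabs t * K - t * ln (r [])) * radius_sum N T r t n.
Proof.
  unfold partition_fn, radius_sum. rewrite <- !lsum_scal_l.
  split; apply lsum_le; intros I _; unfold radius_weight;
    destruct (excluded_middle_informative (Tstar T I)) as [HI|HI].
  - eapply Rle_trans; [|apply (cyl_weight_bounds t I HI)].
    unfold Rpower. rewrite <- exp_plus. apply exp_le. lra.
  - rewrite Rmult_0_r. apply cyl_weight_nonneg.
  - eapply Rle_trans; [apply (cyl_weight_bounds t I HI)|].
    unfold Rpower. rewrite <- exp_plus. apply exp_le. lra.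
  - rewrite Rmult_0_r. unfold cyl_weight. destruct (excluded_middle_informative _); [contradiction|lra].
Qed.

End Partition.

Lemma growth_rate_le (y : nat -> R) L a b :
  Un_cv (fun n => / INR n * y n) L -> (forall n, (1 <= n)%nat -> y n <= a + INR n * b) -> L <= b.
Proof.
  intros Hcv Hy. apply Rnot_lt_le. intro Hlt.
  destruct (Hcv ((L - b) / 2) ltac:(lra)) as [N0 HN0].
  destruct (INR_archimed ((L - b) / 2) (Rabs a) ltac:(lra)) as [n1 Hn1].
  set (n := max 1 (max N0 n1)).
  assert (Hn : 0 < INR n) by (apply lt_0_INR; lia).
  assert (INR n1 * ((L - b) / 2) <= INR n * ((L - b) / 2))
    by (apply Rmult_le_compat_r; [lra|apply le_INR; lia]).
  specialize (HN0 n ltac:(lia)). unfold R_dist in HN0. apply Rabs_def2 in HN0.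
  assert (Hdiv : / INR n * y n <= Rabs a / INR n + b).
  { apply Rmult_le_reg_l with (INR n); auto.
    replace (INR n * (/ INR n * y n)) with (y n) by (field; lra).
    replace (INR n * (Rabs a / INR n + b)) with (Rabs a + INR n * b) by (field; lra).
    pose proof (Hy n ltac:(lia)). pose proof (Rle_abs a). lra. }
  assert (Rabs a / INR n < (L - b) / 2).
  { apply Rmult_lt_reg_l with (INR n); auto.
    replace (INR n * (Rabs a / INR n)) with (Rabs a) by (field; lra). lra. }
  lra.
Qed.

Lemma growth_rate_ge (y : nat -> R) L a b :
  Un_cv (fun n => / INR n * y n) L -> (forall n, (1 <= n)%nat -> a + INR n * b <= y n) -> b <= L.
Proof.
  intros Hcv Hy.
  assert (Hopp : Un_cv (fun n => / INR n * - y n) (- L)).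
  { intros eps Heps. destruct (CV_opp _ _ Hcv eps Heps) as [N0 HN0]. exists N0.
    intros n Hn. specialize (HN0 n Hn). unfold opp_seq in HN0. rewrite Ropp_mult_distr_r_reverse.
    exact HN0. }
  enough (- L <= - b) by lra.
  apply (growth_rate_le _ _ (- a) _ Hopp). intros n Hn. specialize (Hy n Hn). lra.
Qed.

(** Fekete's lemma: for subadditive u bounded below by an affine function,
    u_n / n converges (to its infimum) *)

Section Fekete.
Variable u : nat -> R.
Hypothesis Hsub : forall n m, u (n + m)%nat <= u n + u m.

Lemma subadd_multiple q k : u (S q * k)%nat <= INR (S q) * u k.
Proof.
  induction q as [|q IH].
  - rewrite Nat.mul_1_l. simpl. lra.
  - replace (S (S q) * k)%nat with (S q * k + k)%nat by lia. rewrite S_INR.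
    pose proof (Hsub (S q * k) k). lra.
Qed.

Lemma subadd_decomp q k r : u (S q * k + r)%nat <= INR (S q) * u k + INR r * u 1%nat.
Proof.
  induction r as [|r IH].
  - rewrite Nat.add_0_r. change (INR 0) with 0. pose proof (subadd_multiple q k). lra.
  - replace (S q * k + S r)%nat with (S q * k + r + 1)%nat by lia. rewrite (S_INR r).
    pose proof (Hsub (S q * k + r) 1). lra.
Qed.

Lemma subadd_tail k n : (1 <= k <= n)%nat ->
  / INR n * u n <= / INR k * u k + INR k * (Rabs (u 1%nat) + Rabs (/ INR k * u k)) / INR n.
Proof.
  intros Hkn. set (x := / INR k * u k). set (M := Rabs (u 1%nat) + Rabs x).
  assert (Hk : 0 < INR k) by (apply lt_0_INR; lia).
  assert (Hn : 0 < INR n) by (apply lt_0_INR; lia).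
  destruct (n / k)%nat as [|q] eqn:Hq.
  { apply Nat.div_small_iff in Hq; lia. }
  set (r := (n mod k)%nat).
  assert (Hdec : n = (S q * k + r)%nat)
    by (unfold r; rewrite <- Hq, Nat.mul_comm; apply Nat.div_mod; lia).
  assert (Hrk : INR r <= INR k) by (apply le_INR; unfold r; pose proof (Nat.mod_upper_bound n k); lia).
  assert (HnR : INR n = INR (S q) * INR k + INR r) by (rewrite Hdec, plus_INR, mult_INR; reflexivity).
  assert (Hun : u n <= INR n * x + INR k * M).
  { pose proof (subadd_decomp q k r) as H. rewrite <- Hdec in H.
    replace (u k) with (INR k * x) in H by (unfold x; field; lra).
    assert (INR r * (u 1%nat - x) <= INR k * M).
    { assert (Hux : u 1%nat - x <= M).
      { unfold M. pose proof (Rle_abs (u 1%nat)). pose proof (Rle_abs (- x)). rewrite Rabs_Ropp in *. lra. }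
      assert (0 <= M) by (unfold M; pose proof (Rabs_pos (u 1%nat)); pose proof (Rabs_pos x); lra).
      apply Rle_trans with (INR r * M); [apply Rmult_le_compat_l; auto; apply pos_INR|].
      apply Rmult_le_compat_r; auto. }
    rewrite HnR. lra. }
  apply Rmult_le_reg_l with (INR n); auto.
  replace (INR n * (/ INR n * u n)) with (u n) by (field; lra).
  replace (INR n * (x + INR k * M / INR n)) with (INR n * x + INR k * M) by (field; lra). lra.
Qed.

Lemma fekete c0 c1 : (forall n, c0 + INR n * c1 <= u n) ->
  exists L, Un_cv (fun n => / INR n * u n) L.
Proof.
  intro Hlow.
  assert (Hbnd : forall n, (1 <= n)%nat -> c1 - Rabs c0 <= / INR n * u n).
  { intros n Hn. assert (Hn1 : 1 <= INR n) by (apply (le_INR 1); auto).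
    apply Rmult_le_reg_l with (INR n); [lra|].
    replace (INR n * (/ INR n * u n)) with (u n) by (field; lra).
    pose proof (Hlow n). pose proof (Rle_abs (- c0)). rewrite Rabs_Ropp in *.
    pose proof (Rabs_pos c0). nra. }
  (* L = inf_{n >= 1} u_n / n *)
  set (E := fun y => exists n, (1 <= n)%nat /\ y = - (/ INR n * u n)).
  destruct (completeness E) as [l [Hub Hleast]].
  { exists (Rabs c0 - c1). intros y (n & Hn & ->). specialize (Hbnd n Hn). lra. }
  { exists (- (/ INR 1 * u 1%nat)), 1%nat. auto. }
  exists (- l). intros eps Heps.
  assert (Hk : exists k, (1 <= k)%nat /\ / INR k * u k < - l + eps / 2).
  { apply NNPP. intro Hn. assert (l <= l - eps / 2); [|lra].
    apply Hleast. intros y (n & Hn1 & ->).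
    assert (~ (/ INR n * u n < - l + eps / 2)) by (intro; apply Hn; exists n; auto). lra. }
  destruct Hk as (k & Hk1 & Hk2).
  set (M := Rabs (u 1%nat) + Rabs (/ INR k * u k)).
  assert (HM : 0 <= M) by (unfold M; pose proof (Rabs_pos (u 1%nat)); pose proof (Rabs_pos (/ INR k * u k)); lra).
  destruct (INR_archimed (eps / 2) (INR k * M) ltac:(lra)) as [N0 HN0].
  exists (max k N0). intros n Hn. unfold R_dist.
  assert (HnR : 0 < INR n) by (apply lt_0_INR; lia).
  assert (Hinf : - l <= / INR n * u n) by (assert (- (/ INR n * u n) <= l) by (apply Hub; exists n; split; [lia|auto]); lra).
  pose proof (subadd_tail k n ltac:(lia)) as Htail. fold M in Htail.
  assert (INR k * M / INR n < eps / 2).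
  { apply Rmult_lt_reg_l with (INR n); auto.
    replace (INR n * (INR k * M / INR n)) with (INR k * M) by (field; lra).
    assert (INR N0 <= INR n) by (apply le_INR; lia). nra. }
  apply Rabs_def1; lra.
Qed.

End Fekete.
(** The pressure of -t f *)

Lemma radius_sum_compare N T r t u n c :
  (forall I, Tstar T I -> length I = n -> (t - u) * ln (r I) <= c) ->
  radius_sum N T r t n <= exp c * radius_sum N T r u n.
Proof.
  intro Hc. unfold radius_sum. rewrite <- lsum_scal_l. apply lsum_le. intros I HI.
  apply In_words_length in HI. unfold radius_weight.
  destruct (excluded_middle_informative _) as [HIT|]; [|lra].
  unfold Rpower. replace (t * ln (r I)) with ((t - u) * ln (r I) + u * ln (r I)) by ring.
  rewrite exp_plus. apply Rmult_le_compat_r; [left; apply exp_pos|]. apply exp_le; auto.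
Qed.

Section Pressure.
Context {N : nat} {T : seqw -> Prop} {A : nat -> nat -> nat} {r : list nat -> R}
  {rhow : seqw -> R} {s E rho Rc K : R}.
Hypotheses (HN : (2 <= N)%nat) (HM1 : M1 N T A) (Hrpos : forall I, Tstar T I -> 0 < r I)
  (HE : 0 < E) (HT3 : T3' T r s E)
  (Hrho : 0 < rho) (HRc : 0 < Rc < 1) (HT5 : T5 T r rho)
  (HM3 : forall I i, Tstar T (I ++ [i]) -> r (I ++ [i]) <= Rc * r I)
  (HK : forall n w, T w ->
     Rabs (ln (r (pref w n)) - ln (r []) + birkhoff (fun v => ln (/ rhow v)) n w) <= K).

Let Z (t : R) (n : nat) : R := partition_fn N T (potential rhow t) n.

(* (T'3) applied to the cut set T_n: Σ_{I ∈ T_n} r_I^s is comparable to r_∅^s *)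
Lemma radius_sum_at_s n :
  / E * Rpower (r []) s <= radius_sum N T r s n <= E * Rpower (r []) s.
Proof.
  set (Ic := fun J => Tstar T J /\ length J = n).
  set (l := filter (fun I => if excluded_middle_informative (Tstar T I) then true else false)
              (words N n)).
  assert (Hsum : lsum (map (fun I => Rpower (r I) s) l) = radius_sum N T r s n)
    by apply lsum_filter.
  assert (Hl : forall I, In I l <-> Ic I).
  { intro I. unfold l, Ic. rewrite filter_In. split.
    - intros [H1 H2]. destruct (excluded_middle_informative _); [|discriminate].
      split; auto. eapply In_words_length; eauto.
    - intros [H1 <-]. split; [apply (Tstar_words HM1); auto|].
      destruct (excluded_middle_informative _); tauto. }
  destruct (T_nonempty HM1 HN) as [w Hw].
  destruct (HT3 [] (Tstar_nil HM1 HN) n Ic) as [Hge Hle].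
  - intros J [HJ HJl]. split; auto. lia.
  - intros v Hv. exists n. split; [split; [apply Tstar_pref; auto|apply pref_length]|].
    intros k [_ Hk]. rewrite pref_length in Hk. auto.
  - exists (pref w n). split; [apply Tstar_pref; auto|apply pref_length].
  - split.
    + apply Rnot_lt_le. intro Hlt.
      destruct (Hge (/ E * Rpower (r []) s - radius_sum N T r s n) ltac:(lra)) as (l' & Hnd' & Hin' & Hgt).
      assert (lsum (map (fun I => Rpower (r I) s) l') <= lsum (map (fun I => Rpower (r I) s) l)).
      { apply lsum_incl; auto.
        - intros I HI. apply Hl. destruct (Hin' I HI) as (J & -> & HJ). exact HJ.
        - intros; left; apply exp_pos. }
      lra.
    + rewrite <- Hsum. apply Hle; [apply NoDup_filter, NoDup_words|].
      intros I HI. exists I. split; auto. apply Hl; auto.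
Qed.

(* a lower bound valid for every exponent, from |log r_I| <= |log r_∅| - |I| log ρ *)
Lemma radius_sum_lower t n :
  exp (- Rabs (s - t) * (Rabs (ln (r [])) - INR n * ln rho)) * (/ E * Rpower (r []) s)
  <= radius_sum N T r t n.
Proof.
  set (c := Rabs (s - t) * (Rabs (ln (r [])) - INR n * ln rho)).
  assert (Hcmp : radius_sum N T r s n <= exp c * radius_sum N T r t n).
  { apply radius_sum_compare. intros I HI <-.
    pose proof (ln_radius_abs Hrpos Hrho HRc HT5 HM3 I HI) as Hrad.
    pose proof (Rabs_triang_inv (ln (r I)) (ln (r []))).
    assert (Rabs (ln (r I)) <= Rabs (ln (r [])) - INR (length I) * ln rho) by lra.
    apply Rle_trans with (Rabs ((s - t) * ln (r I))); [apply Rle_abs|].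
    rewrite Rabs_mult. apply Rmult_le_compat_l; auto. apply Rabs_pos. }
  pose proof (proj1 (radius_sum_at_s n)). pose proof (exp_pos c).
  replace (- Rabs (s - t) * (Rabs (ln (r [])) - INR n * ln rho)) with (- c) by (unfold c; ring).
  rewrite exp_Ropp. apply Rmult_le_reg_l with (exp c); auto.
  rewrite <- Rmult_assoc, Rinv_r by lra. lra.
Qed.

Lemma radius_sum_pos t n : 0 < radius_sum N T r t n.
Proof.
  eapply Rlt_le_trans; [|apply radius_sum_lower].
  apply Rmult_lt_0_compat; [apply exp_pos|].
  apply Rmult_lt_0_compat; [apply Rinv_0_lt_compat; auto|apply exp_pos].
Qed.

Lemma ln_partition_bounds t n :
  - Rabs t * K <= ln (Z t n) - (ln (radius_sum N T r t n) - t * ln (r [])) <= Rabs t * K.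
Proof.
  destruct (partition_vs_radius_sum (N := N) HK t n) as [H1 H2]. fold (Z t n) in H1, H2.
  pose proof (radius_sum_pos t n).
  assert (Hp : 0 < exp (- Rabs t * K - t * ln (r [])) * radius_sum N T r t n)
    by (apply Rmult_lt_0_compat; auto; apply exp_pos).
  apply ln_le in H2; [|lra]. apply ln_le in H1; auto.
  rewrite ln_mult, ln_exp in H1, H2; try apply exp_pos; auto. lra.
Qed.

(* Fekete's lemma applied to the submultiplicative Z_n *)
Lemma pressure_exists t : exists P, is_pressure N T (potential rhow t) P.
Proof.
  assert (HZ : forall n, 0 < Z t n).
  { intro n. pose proof (proj1 (partition_vs_radius_sum (N := N) HK t n)).
    pose proof (radius_sum_pos t n). eapply Rlt_le_trans; [|eauto].
    apply Rmult_lt_0_compat; auto. apply exp_pos. }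
  assert (Hsub : forall n m, ln (Z t (n + m)) <= ln (Z t n) + ln (Z t m)).
  { intros n m. rewrite <- ln_mult by auto. apply ln_le; auto. apply (partition_submult HM1 HK). }
  assert (Hs0 : 0 < / E * Rpower (r []) s)
    by (apply Rmult_lt_0_compat; [apply Rinv_0_lt_compat; auto|apply exp_pos]).
  assert (Hlow : forall n, ln (/ E * Rpower (r []) s) - Rabs (s - t) * Rabs (ln (r []))
      - t * ln (r []) - Rabs t * K + INR n * (Rabs (s - t) * ln rho) <= ln (Z t n)).
  { intro n. pose proof (ln_partition_bounds t n).
    pose proof (ln_le _ _ (Rmult_lt_0_compat _ _ (exp_pos _) Hs0) (radius_sum_lower t n)) as Hln.
    rewrite ln_mult, ln_exp in Hln by (auto; apply exp_pos). lra. }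
  destruct (fekete _ Hsub _ _ Hlow) as [P HP].
  exists P. apply (is_pressure_partition N T (potential rhow t) P). exact HP.
Qed.

(* at t = s the partition function stays bounded, so p(-s f) = 0 *)
Lemma pressure_at_s P : is_pressure N T (potential rhow s) P -> P = 0.
Proof.
  intro HP. apply (is_pressure_partition N T (potential rhow s) P) in HP.
  assert (Hsum : forall n, / E * Rpower (r []) s <= radius_sum N T r s n <= E * Rpower (r []) s)
    by apply radius_sum_at_s.
  assert (Hs0 : 0 < / E * Rpower (r []) s)
    by (apply Rmult_lt_0_compat; [apply Rinv_0_lt_compat; auto|apply exp_pos]).
  assert (Hlo : forall n, (1 <= n)%nat ->
    ln (/ E * Rpower (r []) s) - s * ln (r []) - Rabs s * K + INR n * 0 <= ln (Z s n)).
  { intros n _. pose proof (ln_partition_bounds s n). destruct (Hsum n) as [H1 _].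
    apply ln_le in H1; auto. lra. }
  assert (Hhi : forall n, (1 <= n)%nat ->
    ln (Z s n) <= ln (E * Rpower (r []) s) - s * ln (r []) + Rabs s * K + INR n * 0).
  { intros n _. pose proof (ln_partition_bounds s n). destruct (Hsum n) as [_ H2].
    apply ln_le in H2; [|apply radius_sum_pos]. lra. }
  pose proof (growth_rate_ge _ _ _ _ HP Hlo). pose proof (growth_rate_le _ _ _ _ HP Hhi). lra.
Qed.

Lemma pressure_decreasing u t P Q : u <= t ->
  is_pressure N T (potential rhow u) P -> is_pressure N T (potential rhow t) Q ->
  Q <= P + (t - u) * ln Rc.
Proof.
  intros Hut HP HQ.
  apply (is_pressure_partition N T (potential rhow u) P) in HP.
  apply (is_pressure_partition N T (potential rhow t) Q) in HQ.
  assert (Hdiff : Un_cv (fun n => / INR n * (ln (Z t n) - ln (Z u n))) (Q - P)).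
  { intros eps Heps. destruct (CV_minus _ _ _ _ HQ HP eps Heps) as [N0 HN0]. exists N0.
    intros n Hn. rewrite Rmult_minus_distr_l. apply HN0; auto. }
  enough (Q - P <= (t - u) * ln Rc) by lra.
  apply (growth_rate_le _ _ ((t - u) * ln (r []) + (u - t) * ln (r []) + Rabs t * K + Rabs u * K)
           _ Hdiff).
  intros n _.
  assert (Hcmp : radius_sum N T r t n <=
                 exp ((t - u) * (ln (r []) + INR n * ln Rc)) * radius_sum N T r u n).
  { apply radius_sum_compare. intros I HI <-.
    pose proof (ln_radius_bounds_Tstar Hrpos Hrho HRc HT5 HM3 I HI). nra. }
  apply ln_le in Hcmp; [|apply radius_sum_pos].
  rewrite ln_mult, ln_exp in Hcmp by (try apply exp_pos; apply radius_sum_pos).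
  pose proof (ln_partition_bounds t n). pose proof (ln_partition_bounds u n). nra.
Qed.

End Pressure.

Theorem mainTheorem9
  (X : Type) (d : X -> X -> R)
  (Hmetric : is_metric d) (Hcomplete : complete_space d) (Hdoubling : doubling d)
  (N : nat) (HN : (2 <= N)%nat)
  (T : seqw -> Prop) (x : list nat -> X) (r : list nat -> R)
  (Hrpos : forall I, Tstar T I -> 0 < r I)
  (s rho C D E G : R)
  (Hrho : 0 < rho) (HC : 0 < C) (HD : 0 < D) (HE : 0 < E) (HG : 0 <= G)
  (HT1 : T1 d T x r C) (HT2 : T2 d T x r D) (HT3 : T3' T r s E)
  (HT4 : T4 T r) (HT5 : T5 T r rho)
  (A : nat -> nat -> nat) (HM1 : M1 N T A)
  (HM2 : M2 d T x) (HM3 : M3 T r)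
  (phi : nat -> X -> X) (W delta0 : R) (HM4 : M4 d N T x r G phi W delta0)
  (xi : R) (kp km : nat -> list nat -> R) (HM5 : M5 d T x r G phi delta0 xi kp km)
  (rhow : seqw -> R) (f1t f2t : seqw -> R) (HM6 : M6 N T r kp km rhow f1t f2t)
  (HM7 : non_lattice T (fun w => ln (/ rhow w))) :
  forall t : R, exists P : R,
    is_pressure N T (fun w => - t * ln (/ rhow w)) P /\ (P = 0 <-> t = s).
Proof.
  intro t.
  pose proof (kp_pos Hmetric Hrpos HM1 HM4 HM5) as Hkp.
  destruct (bounded_distortion HM1 Hrpos Hrho HT5 HM3 Hkp HM5 HM6) as [K HK].
  destruct HM3 as (Rc & HRc & HM3').
  pose proof (ln_Rc_neg HRc) as HlnRc.
  destruct (pressure_exists HN HM1 Hrpos HE HT3 Hrho HRc HT5 HM3' HK t) as [P HP].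
  destruct (pressure_exists HN HM1 Hrpos HE HT3 Hrho HRc HT5 HM3' HK s) as [Ps HPs].
  pose proof (pressure_at_s HN HM1 Hrpos HE HT3 Hrho HRc HT5 HM3' HK Ps HPs) as HPs0.
  exists P. split; [exact HP|].
  destruct (Rtotal_order t s) as [Hlt|[Heq|Hgt]].
  - (* t < s: p(-t f) >= p(-s f) + (s - t) |log R| > 0 *)
    pose proof (pressure_decreasing HN HM1 Hrpos HE HT3 Hrho HRc HT5 HM3' HK t s P Ps
                  (Rlt_le _ _ Hlt) HP HPs).
    split; intro; [nra|lra].
  - subst t. split; auto. intros _. rewrite (UL_sequence _ _ _ HP HPs). exact HPs0.
  - (* t > s: p(-t f) <= (t - s) log R < 0 *)
    pose proof (pressure_decreasing HN HM1 Hrpos HE HT3 Hrho HRc HT5 HM3' HK s t Ps P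
                  (Rlt_le _ _ Hgt) HPs HP).
    split; intro; [nra|lra].
Qed.
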